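(* Let $\Phi:(\mathcal{S},g)\to(\mathcal{M},\bar g)$ be an isometric immersion of an $n$-dimensional orientable Riemannian manifold into a semi-Riemannian manifold with co-dimension $k$. For every $p\in\mathcal{S}$, the umbilical space and the shear space at $p$ satisfy $$\mathscr{U}_p=(\mathrm{Im}\,\widetilde h_p)^\perp\quad\text{and}\quad k-\dim\mathscr{U}_p=\dim\mathrm{Im}\,\widetilde h_p,$$ where $(\mathrm{Im}\,\widetilde h_p)^\perp=\{\eta_p\in T_p\mathcal{S}^\perp:\bar g(\eta_p,\xi_p)=0\ \forall\xi_p\in\mathrm{Im}\,\widetilde h_p\}$.
   Context: $g=\Phi^\star\bar g$ is positive definite. The second fundamental form $h$ is the normal part of $\overline\nabla_XY$; the shape operator $A_\xi$ of a normal vector $\xi$ satisfies $g(A_\xi X,Y)=\bar g(h(X,Y),\xi)$; $H=\frac1n\mathrm{tr}_g h$ is the mean curvature vector. The total shear tensor is $\widetilde h(X,Y)=h(X,Y)-g(X,Y)H$. The shear space at $p$ is $\mathrm{Im}\,\widetilde h_p=\mathrm{span}\{\widetilde h(v,w):v,w\in T_p\mathcal{S}\}\subseteq T_p\mathcal{S}^\perp$. The umbilical space at $p$ is $\mathscr{U}_p=\{\xi_p\in T_p\mathcal{S}^\perp: A_{\xi_p}\text{ is proportional to the identity}\}$. *)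

(* Pointwise (linear-algebraic) model of the data at a point p:
   T_pS = 'rV[R]_n with metric g given by a positive definite symmetric matrix G,
   T_pS^perp = 'rV[R]_k with the restriction of gbar given by a nondegenerate
   symmetric matrix B (arbitrary signature), and the second fundamental form
   h_p : T_pS x T_pS -> T_pS^perp a symmetric bilinear map. *)
From HB Require Import structures.
From mathcomp Require Import all_boot all_order all_algebra.
Set Implicit Arguments. Unset Strict Implicit. Unset Printing Implicit Defensive.
Import Order.TTheory GRing.Theory Num.Theory.
Local Open Scope ring_scope.

Section Defs.
Variables (R : realFieldType) (n k : nat).

Definition bform {m : nat} (M : 'M[R]_m) (x y : 'rV[R]_m) : R := (x *m M *m y^T) 0 0.

Definition pos_def_sym {m : nat} (M : 'M[R]_m) : Prop :=
  M^T = M /\ forall x : 'rV[R]_m, x != 0 -> 0 < bform M x x.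

Definition nondeg_sym {m : nat} (M : 'M[R]_m) : Prop :=
  M^T = M /\ M \in unitmx.

Definition sym_bilinear (h : 'rV[R]_n -> 'rV[R]_n -> 'rV[R]_k) : Prop :=
  (forall a x y z, h (a *: x + y) z = a *: h x z + h y z) /\
  (forall x y, h x y = h y x).

Definition ebase (i : 'I_n) : 'rV[R]_n := delta_mx 0 i.

Definition mean_curv (G : 'M[R]_n) (h : 'rV[R]_n -> 'rV[R]_n -> 'rV[R]_k) : 'rV[R]_k :=
  n%:R^-1 *: \sum_(i < n) \sum_(j < n) (invmx G i j) *: h (ebase i) (ebase j).

Definition shear (G : 'M[R]_n) (h : 'rV[R]_n -> 'rV[R]_n -> 'rV[R]_k)
  (x y : 'rV[R]_n) : 'rV[R]_k :=
  h x y - bform G x y *: mean_curv G h.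

(* shape operator A_xi (row-vector convention, acting as X |-> X *m A_xi),
   characterised by g(A_xi X, Y) = gbar(h(X,Y), xi) *)
Definition shape_op (G : 'M[R]_n) (B : 'M[R]_k)
  (h : 'rV[R]_n -> 'rV[R]_n -> 'rV[R]_k) (xi : 'rV[R]_k) : 'M[R]_n :=
  (\matrix_(i, j) bform B (h (ebase i) (ebase j)) xi) *m invmx G.

Definition umbilical (G : 'M[R]_n) (B : 'M[R]_k)
  (h : 'rV[R]_n -> 'rV[R]_n -> 'rV[R]_k) (xi : 'rV[R]_k) : Prop :=
  exists c : R, shape_op G B h xi = c%:M.

Definition in_shear_space (G : 'M[R]_n)
  (h : 'rV[R]_n -> 'rV[R]_n -> 'rV[R]_k) (xi : 'rV[R]_k) : Prop :=
  exists (m : nat) (c : 'I_m -> R) (v w : 'I_m -> 'rV[R]_n),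
    xi = \sum_(l < m) c l *: shear G h (v l) (w l).

Definition represents (U : 'M[R]_k) (P : 'rV[R]_k -> Prop) : Prop :=
  forall x : 'rV[R]_k, (x <= U)%MS <-> P x.

End Defs.

From HB Require Import structures.
From mathcomp Require Import all_boot all_order all_algebra.
Set Implicit Arguments. Unset Strict Implicit. Unset Printing Implicit Defensive.
Import Order.TTheory GRing.Theory Num.Theory.
Local Open Scope ring_scope.

(* The shape operator A_xi is G^-1 times the Gram matrix of (X, Y) |-> gbar(h(X, Y), xi), and
   gbar(htilde(X, Y), xi) = gbar(h(X, Y), xi) - g(X, Y) gbar(H, xi).  Hence xi is orthogonal
   to every value of htilde exactly when that Gram matrix is gbar(H, xi) G, i.e. when
   A_xi = gbar(H, xi) Id; conversely A_xi = c Id forces c = gbar(H, xi) by taking g-traces.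
   Since gbar is nondegenerate on the normal space, the orthogonal of the shear space has
   dimension k - dim Im htilde. *)

Section BilinearForm.
Variables (R : realFieldType) (m : nat) (M : 'M[R]_m).

Lemma bform_tr x y : bform M x y = bform M^T y x.
Proof. by rewrite /bform -[x *m M *m y^T]trmxK [in LHS]mxE !trmx_mul trmxK mulmxA. Qed.

Lemma bform_sym x y : M^T = M -> bform M x y = bform M y x.
Proof. by move=> M_sym; rewrite bform_tr M_sym. Qed.

Lemma bform_suml I (r : seq I) (P : pred I) (F : I -> 'rV_m) y :
  bform M (\sum_(i <- r | P i) F i) y = \sum_(i <- r | P i) bform M (F i) y.
Proof. by rewrite /bform !mulmx_suml summxE. Qed.

Lemma bform_scalel a x y : bform M (a *: x) y = a * bform M x y.
Proof. by rewrite /bform -!scalemxAl mxE. Qed.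

Lemma bform_addl x x' y : bform M (x + x') y = bform M x y + bform M x' y.
Proof. by rewrite /bform !mulmxDl mxE. Qed.

Lemma bform_subl x x' y : bform M (x - x') y = bform M x y - bform M x' y.
Proof. by rewrite -scaleN1r bform_addl bform_scalel mulN1r. Qed.

Lemma bform_sumr I (r : seq I) (P : pred I) (F : I -> 'rV_m) x :
  bform M x (\sum_(i <- r | P i) F i) = \sum_(i <- r | P i) bform M x (F i).
Proof. by rewrite /bform raddf_sum mulmx_sumr summxE. Qed.

Lemma bform_scaler a x y : bform M x (a *: y) = a * bform M x y.
Proof. by rewrite /bform linearZ -scalemxAr mxE. Qed.

Lemma bform_scalemx c x y : bform (c *: M) x y = c * bform M x y.
Proof. by rewrite /bform -scalemxAr -scalemxAl mxE. Qed.

Lemma bform_delta i j : bform M (delta_mx 0 i) (delta_mx 0 j) = M i j.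
Proof. by rewrite /bform trmx_delta -rowE -colE !mxE. Qed.

Lemma bform_expand v w : bform M v w = \sum_i \sum_j (v 0 i * w 0 j) * M i j.
Proof.
rewrite {1}(row_sum_delta v) {1}(row_sum_delta w) bform_suml.
apply: eq_bigr => i _; rewrite bform_scalel bform_sumr mulr_sumr.
by apply: eq_bigr => j _; rewrite bform_scaler bform_delta mulrA.
Qed.

End BilinearForm.

Lemma pos_def_sym_unitmx (R : realFieldType) m (M : 'M[R]_m) :
  pos_def_sym M -> M \in unitmx.
Proof.
case=> _ M_pos; rewrite -row_free_unit -kermx_eq0.
apply/rowV0Pn => -[v /sub_kermxP vM0 /M_pos].
by rewrite /bform vM0 mul0mx mxE ltxx.
Qed.

Lemma frobenius_invmx_sym (R : fieldType) m (M : 'M[R]_m) :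
  M^T = M -> M \in unitmx -> \sum_i \sum_j invmx M i j * M i j = m%:R.
Proof.
move=> M_sym M_unit; rewrite -(mxtrace1 R m) -(mulVmx M_unit).
apply: eq_bigr => i _; rewrite mxE; apply: eq_bigr => j _.
by rewrite -{2}M_sym mxE.
Qed.

Section LinearExpansion.
Variables (R : pzRingType) (V : lmodType R) (m : nat).

Lemma linear_row_expand (F : 'rV[R]_m -> V) :
  (forall a x y, F (a *: x + y) = a *: F x + F y) ->
  forall v, F v = \sum_i v 0 i *: F (delta_mx 0 i).
Proof.
move=> F_lin v.
have F0 : F 0 = 0.
  by have := F_lin 1 0 0; rewrite scaler0 addr0 scale1r -{1}[F 0]addr0 => /addrI.
have FD : {morph F : x y / x + y} by move=> x y; rewrite -[x]scale1r F_lin !scale1r.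
have FZ a x : F (a *: x) = a *: F x by rewrite -[a *: x]addr0 F_lin F0 addr0.
rewrite {1}(row_sum_delta v) (big_morph F FD F0).
by apply: eq_bigr => i _; rewrite FZ.
Qed.

Variable f : 'rV[R]_m -> 'rV[R]_m -> V.
Hypotheses (f_linl : forall a x y z, f (a *: x + y) z = a *: f x z + f y z)
           (f_linr : forall a x y z, f z (a *: x + y) = a *: f z x + f z y).

Lemma bilinear_expand v w :
  f v w = \sum_i \sum_j (v 0 i * w 0 j) *: f (delta_mx 0 i) (delta_mx 0 j).
Proof.
rewrite (linear_row_expand (fun a x y => f_linl a x y w)); apply: eq_bigr => i _.
rewrite (linear_row_expand (fun a x y => f_linr a x y (delta_mx 0 i))) scaler_sumr.
by apply: eq_bigr => j _; rewrite scalerA.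
Qed.

End LinearExpansion.

Lemma sub_sumsmx_ind (R : fieldType) (I : finType) k (A_ : I -> 'M[R]_k)
    (P : 'rV[R]_k -> Prop) :
  P 0 -> (forall x y, P x -> P y -> P (x + y)) ->
  (forall i u, (u <= A_ i)%MS -> P u) ->
  forall u, (u <= \sum_i A_ i)%MS -> P u.
Proof.
move=> P0 PD PA u /sub_sumsmxP[u_ ->].
by apply: (big_ind P) => // i _; apply: (PA i); apply: submxMl.
Qed.

Section ValueSpan.
Variables (R : fieldType) (n k : nat) (f : 'rV[R]_n -> 'rV[R]_n -> 'rV[R]_k).

Definition in_value_span (xi : 'rV[R]_k) : Prop :=
  exists (m : nat) (c : 'I_m -> R) (v w : 'I_m -> 'rV[R]_n),
    xi = \sum_(l < m) c l *: f (v l) (w l).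

Definition value_span : 'M[R]_k :=
  (\sum_(i < n) \sum_(j < n) <<f (delta_mx 0 i) (delta_mx 0 j)>>)%MS.

Lemma in_value_span_value v w : in_value_span (f v w).
Proof.
by exists 1%N, (fun _ => 1), (fun _ => v), (fun _ => w); rewrite big_ord1 scale1r.
Qed.

Lemma in_value_span0 : in_value_span 0.
Proof. by exists 0%N, (fun _ => 0), (fun _ => 0), (fun _ => 0); rewrite big_ord0. Qed.

Lemma in_value_spanD x y :
  in_value_span x -> in_value_span y -> in_value_span (x + y).
Proof.
move=> [m1 [c1 [v1 [w1 ->]]]] [m2 [c2 [v2 [w2 ->]]]].
pose glue T (a : 'I_m1 -> T) (b : 'I_m2 -> T) i :=
  match split i with inl i1 => a i1 | inr i2 => b i2 end.
exists (m1 + m2)%N, (glue _ c1 c2), (glue _ v1 v2), (glue _ w1 w2).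
rewrite big_split_ord /glue; congr (_ + _); apply: eq_bigr => i _.
  by rewrite (unsplitK (inl i)).
by rewrite (unsplitK (inr i)).
Qed.

Lemma in_value_spanZ a x : in_value_span x -> in_value_span (a *: x).
Proof.
move=> [m [c [v [w ->]]]]; exists m, (fun l => a * c l), v, w.
by rewrite scaler_sumr; apply: eq_bigr => l _; rewrite scalerA.
Qed.

Hypotheses (f_linl : forall a x y z, f (a *: x + y) z = a *: f x z + f y z)
           (f_linr : forall a x y z, f z (a *: x + y) = a *: f z x + f z y).

Lemma value_sub_span v w : (f v w <= value_span)%MS.
Proof.
rewrite (bilinear_expand f_linl f_linr); apply: summx_sub => i _.
apply: summx_sub => j _; apply: scalemx_sub.
by apply: (sumsmx_sup i) => //; apply: (sumsmx_sup j) => //; rewrite genmxE.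
Qed.

Lemma value_spanP xi : (xi <= value_span)%MS <-> in_value_span xi.
Proof.
split.
  apply: sub_sumsmx_ind in_value_span0 in_value_spanD _ xi => i u.
  apply: sub_sumsmx_ind in_value_span0 in_value_spanD _ u => j u'.
  by rewrite genmxE => /sub_rVP[a ->]; apply/in_value_spanZ/in_value_span_value.
move=> [m [c [v [w ->]]]]; apply: summx_sub => l _.
by apply: scalemx_sub; apply: value_sub_span.
Qed.

End ValueSpan.

Section Orthogonal.
Variables (R : realFieldType) (k : nat).

Definition orthmx (B S : 'M[R]_k) : 'M[R]_k := kermx (B *m S^T).

Lemma sub_orthmxP (B S : 'M[R]_k) x :
  (x <= orthmx B S)%MS <-> forall y, (y <= S)%MS -> bform B x y = 0.
Proof.
rewrite sub_kermx; split=> [/eqP xBS0 y /submxP[D ->] | x_orth].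
  by rewrite /bform trmx_mul !mulmxA -(mulmxA x) xBS0 mul0mx mxE.
apply/eqP/rowP => j; have := x_orth _ (row_sub j S).
by rewrite /bform rowE trmx_mul trmx_delta !mulmxA -colE !mxE.
Qed.

Lemma mxrank_orthmx (B S : 'M[R]_k) :
  B \in unitmx -> \rank (orthmx B S) = (k - \rank S)%N.
Proof.
move=> B_unit; rewrite mxrank_ker -mxrank_tr trmx_mul trmxK mxrankMfree //.
by rewrite row_free_unit unitmx_tr.
Qed.

Lemma represents_eqmx (U U' : 'M[R]_k) (P : 'rV[R]_k -> Prop) :
  represents U P -> represents U' P -> (U == U')%MS.
Proof.
move=> UP U'P; apply/andP; split; apply/row_subP => i.
  by apply/U'P/UP/row_sub.
by apply/UP/U'P/row_sub.
Qed.

End Orthogonal.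

Section ShearSpace.
Variables (R : realFieldType) (n k : nat) (G : 'M[R]_n) (B : 'M[R]_k)
  (h : 'rV[R]_n -> 'rV[R]_n -> 'rV[R]_k).
Hypotheses (n_gt0 : (0 < n)%N) (G_pds : pos_def_sym G) (B_nd : nondeg_sym B)
  (h_sb : sym_bilinear h).

Let G_sym : G^T = G. Proof. by case: G_pds. Qed.
Let G_unit : G \in unitmx. Proof. exact: pos_def_sym_unitmx. Qed.
Let B_sym : B^T = B. Proof. by case: B_nd. Qed.

Lemma h_linl a x y z : h (a *: x + y) z = a *: h x z + h y z.
Proof. by case: h_sb. Qed.

Lemma h_linr a x y z : h z (a *: x + y) = a *: h z x + h z y.
Proof. by case: h_sb => h_lin h_sym; rewrite !(h_sym z) h_lin. Qed.

Lemma shear_linl a x y z :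
  shear G h (a *: x + y) z = a *: shear G h x z + shear G h y z.
Proof.
rewrite /shear h_linl bform_addl bform_scalel scalerDl -scalerA scalerBr.
by rewrite opprD addrACA.
Qed.

Lemma shear_linr a x y z :
  shear G h z (a *: x + y) = a *: shear G h z x + shear G h z y.
Proof.
have shear_sym u v : shear G h u v = shear G h v u.
  by case: h_sb => _ h_sym; rewrite /shear h_sym bform_sym.
by rewrite !(shear_sym z) shear_linl.
Qed.

Definition shape_form (eta : 'rV[R]_k) : 'M[R]_n :=
  \matrix_(i, j) bform B (h (ebase R i) (ebase R j)) eta.

Lemma shape_formE eta v w : bform B (h v w) eta = bform (shape_form eta) v w.
Proof.
rewrite [RHS]bform_expand (bilinear_expand h_linl h_linr) bform_suml.
apply: eq_bigr => i _; rewrite bform_suml; apply: eq_bigr => j _.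
by rewrite bform_scalel mxE.
Qed.

Lemma mean_curv_pairing eta :
  bform B (mean_curv G h) eta =
  n%:R^-1 * \sum_i \sum_j invmx G i j * shape_form eta i j.
Proof.
rewrite /mean_curv bform_scalel bform_suml; congr (_ * _).
apply: eq_bigr => i _; rewrite bform_suml; apply: eq_bigr => j _.
by rewrite bform_scalel mxE.
Qed.

Lemma shear_pairing eta v w :
  bform B (shear G h v w) eta =
  bform (shape_form eta) v w - bform G v w * bform B (mean_curv G h) eta.
Proof. by rewrite /shear bform_subl bform_scalel shape_formE. Qed.

Lemma umbilical_shape_form eta :
  umbilical G B h eta <->
  shape_form eta = bform B (mean_curv G h) eta *: G.
Proof.
split=> [[c] | shape_eq]; last first.
  exists (bform B (mean_curv G h) eta).
  by rewrite /shape_op -/(shape_form eta) shape_eq -scalemxAl mulmxV ?scalemx1.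
rewrite /shape_op -/(shape_form eta) => shape_c.
have shape_cG : shape_form eta = c *: G.
  by rewrite -(mulmxKV G_unit (shape_form eta)) shape_c mul_scalar_mx.
suff -> : bform B (mean_curv G h) eta = c by [].
rewrite mean_curv_pairing shape_cG.
under eq_bigr do under eq_bigr do rewrite mxE mulrCA.
under eq_bigr do rewrite -mulr_sumr.
rewrite -mulr_sumr frobenius_invmx_sym // mulrCA mulVf ?mulr1 //.
by rewrite pnatr_eq0 -lt0n.
Qed.

Lemma shear_orth_shape_form eta :
  (forall v w, bform B (shear G h v w) eta = 0) <->
  shape_form eta = bform B (mean_curv G h) eta *: G.
Proof.
split=> [shear_orth | shape_eq v w]; last first.
  by rewrite shear_pairing shape_eq bform_scalemx mulrC subrr.
apply/matrixP => i j; have /eqP := shear_orth (ebase R i) (ebase R j).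
by rewrite shear_pairing !bform_delta subr_eq0 !mxE mulrC => /eqP.
Qed.

Lemma orth_shear_space_values eta :
  (forall xi, in_shear_space G h xi -> bform B eta xi = 0) <->
  (forall v w, bform B (shear G h v w) eta = 0).
Proof.
split=> eta_orth.
  by move=> v w; rewrite bform_sym //; apply/eta_orth/in_value_span_value.
move=> _ [m [c [v [w ->]]]]; rewrite bform_sumr big1 // => l _.
by rewrite bform_scaler bform_sym // eta_orth mulr0.
Qed.

Lemma umbilical_orth_shear_space eta :
  umbilical G B h eta <->
  (forall xi, in_shear_space G h xi -> bform B eta xi = 0).
Proof.
apply: iff_trans (umbilical_shape_form eta) _.
apply: iff_trans (iff_sym (shear_orth_shape_form eta)) _.
exact: iff_sym (orth_shear_space_values eta).
Qed.

Lemma represents_shear_space :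
  represents (value_span (shear G h)) (in_shear_space G h).
Proof. by move=> xi; apply: value_spanP; [apply: shear_linl | apply: shear_linr]. Qed.

Lemma represents_umbilical :
  represents (orthmx B (value_span (shear G h))) (umbilical G B h).
Proof.
move=> eta; apply: iff_trans (sub_orthmxP _ _ _) _.
apply: iff_trans _ (iff_sym (umbilical_orth_shear_space eta)).
by split=> eta_orth xi /represents_shear_space; apply: eta_orth.
Qed.

End ShearSpace.

Theorem proposition3p1 (R : realFieldType) (n k : nat)
  (G : 'M[R]_n) (B : 'M[R]_k) (h : 'rV[R]_n -> 'rV[R]_n -> 'rV[R]_k) :
  (0 < n)%N ->
  pos_def_sym G -> nondeg_sym B -> sym_bilinear h ->
  (* U_p = (Im htilde_p)^perp *)
  (forall eta : 'rV[R]_k,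
     umbilical G B h eta <->
     (forall xi, in_shear_space G h xi -> bform B eta xi = 0)) /\
  (* both are linear subspaces, and k - dim U_p = dim Im htilde_p *)
  (exists U : 'M[R]_k, represents U (umbilical G B h)) /\
  (exists S : 'M[R]_k, represents S (in_shear_space G h)) /\
  (forall U S : 'M[R]_k,
     represents U (umbilical G B h) -> represents S (in_shear_space G h) ->
     (k - \rank U)%N = \rank S).
Proof.
move=> n_gt0 G_pds B_nd h_sb.
have rep_S := represents_shear_space G_pds h_sb.
have rep_U := represents_umbilical n_gt0 G_pds B_nd h_sb.
split; first exact: umbilical_orth_shear_space.
split; first by eexists; exact: rep_U.
split; first by eexists; exact: rep_S.
move=> U S rep_U' rep_S'.
rewrite (eqmx_rank (represents_eqmx rep_U' rep_U)).
rewrite (eqmx_rank (represents_eqmx rep_S' rep_S)).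
by case: B_nd => _ B_unit; rewrite mxrank_orthmx // subKn // rank_leq_col.
Qed.
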